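(* Let $t$ be an $\mathrm{SL}_2$-tiling with $t_{ij}=1$. Then $t_{xy}\neq 1$ for all $(x,y)$ with $x<i,\ y<j$, and for all $(x,y)$ with $x>i,\ y>j$.
   Context: An $\mathrm{SL}_2$-tiling is a map $t:\mathbb{Z}\times\mathbb{Z}\to\{1,2,3,\dots\}$, $(i,j)\mapsto t_{ij}$, with $t_{ij}t_{i+1,j+1}-t_{i,j+1}t_{i+1,j}=1$ for all $i,j$. *)

From Stdlib Require Import ZArith.
Open Scope Z_scope.

Definition is_SL2_tiling (t : Z -> Z -> Z) : Prop :=
  (forall i j, 1 <= t i j) /\
  (forall i j, t i j * t (i+1) (j+1) - t i (j+1) * t (i+1) j = 1).

From Stdlib Require Import ZArith Lia.
Open Scope Z_scope.

(* In an SL_2-tiling every 2x2 minor taken from rows x < x'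
   and columns y < y' is positive:
       t x' y * t x y'  <  t x y * t x' y'.
   For adjacent rows and columns this is the determinant condition (the
   minor equals 1).  Positive minors of positive matrices compose: gluing
   two blocks with positive minors along a common row (or column) gives a
   block with positive minor.  Hence, by induction on the distance, adjacent
   columns have positive minors for all pairs of rows, and then all pairs of
   columns do.  Finally, if t x y = t i j = 1 with x < i, y < j (or
   x > i, y > j), positivity of the minor gives t i y * t x j < 1, which is
   impossible since all entries are at least 1. *)

Lemma rel_of_consecutive (R : Z -> Z -> Prop) :
  (forall n, R n (n + 1)) ->
  (forall a b c, R a b -> R b c -> R a c) ->
  forall m n, m < n -> R m n.
Proof.
  intros Hstep Htrans m n Hmn.
  refine (Z.lt_ind (R m) _ m _ _ n Hmn).
  - rewrite <- Z.add_1_r; apply Hstep.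
  - intros k _ IHk; rewrite <- Z.add_1_r; eapply Htrans; [exact IHk | apply Hstep].
Qed.

(* Gluing the positive matrices [[a,b],[c,d]] and [[b,e],[d,f]] along the
   column (b,d): if both have positive determinant, so does [[a,e],[c,f]].
   By symmetry of the determinant under transposition this also glues along
   a common row. *)
Lemma minor_compose (a b c d e f : Z) :
  0 < a -> 0 < b -> 0 < c -> 0 < d -> 0 < e -> 0 < f ->
  b * c < a * d -> d * e < b * f -> c * e < a * f.
Proof.
  intros Ha Hb Hc Hd He Hf Hl Hr.
  assert (Hprod : (b * c) * (d * e) < (a * d) * (b * f))
    by (apply Z.mul_lt_mono_nonneg; lia).
  apply (Z.mul_lt_mono_pos_r (b * d)); [lia|].
  replace (c * e * (b * d)) with ((b * c) * (d * e)) by ring.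
  replace (a * f * (b * d)) with ((a * d) * (b * f)) by ring.
  exact Hprod.
Qed.

Section PositiveMinors.
Variable t : Z -> Z -> Z.
Hypothesis t_ge1 : forall i j, 1 <= t i j.
Hypothesis t_det : forall i j, t i j * t (i+1) (j+1) - t i (j+1) * t (i+1) j = 1.

Definition minor_pos (x x' y y' : Z) : Prop :=
  t x' y * t x y' < t x y * t x' y'.

Lemma minor_pos_consecutive_columns (y x x' : Z) :
  x < x' -> minor_pos x x' y (y + 1).
Proof.
  revert x x'; apply rel_of_consecutive; unfold minor_pos.
  - intro x; specialize (t_det x y); lia.
  - intros x1 x2 x3 H12 H23.
    pose proof (minor_compose (t x1 y) (t x2 y) (t x1 (y+1)) (t x2 (y+1))
                  (t x3 y) (t x3 (y+1))) as Hglue.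
    pose proof (t_ge1 x1 y); pose proof (t_ge1 x2 y); pose proof (t_ge1 x3 y).
    pose proof (t_ge1 x1 (y+1)); pose proof (t_ge1 x2 (y+1)); pose proof (t_ge1 x3 (y+1)).
    lia.
Qed.

Lemma minor_pos_all (x x' y y' : Z) :
  x < x' -> y < y' -> minor_pos x x' y y'.
Proof.
  intros Hx; revert y y'; apply rel_of_consecutive.
  - intro y; exact (minor_pos_consecutive_columns y x x' Hx).
  - unfold minor_pos; intros y1 y2 y3 H12 H23.
    pose proof (minor_compose (t x y1) (t x y2) (t x' y1) (t x' y2)
                  (t x y3) (t x' y3)) as Hglue.
    pose proof (t_ge1 x y1); pose proof (t_ge1 x y2); pose proof (t_ge1 x y3).
    pose proof (t_ge1 x' y1); pose proof (t_ge1 x' y2); pose proof (t_ge1 x' y3).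
    lia.
Qed.

End PositiveMinors.

Theorem proposition6p2 (t : Z -> Z -> Z) (i j : Z) :
  is_SL2_tiling t -> t i j = 1 ->
  (forall x y, x < i -> y < j -> t x y <> 1) /\
  (forall x y, i < x -> j < y -> t x y <> 1).
Proof.
  intros [t_ge1 t_det] Hij; split; intros x y Hx Hy Hxy.
  - pose proof (minor_pos_all t t_ge1 t_det x i y j Hx Hy) as Hminor.
    unfold minor_pos in Hminor.
    pose proof (t_ge1 i y); pose proof (t_ge1 x j); nia.
  - pose proof (minor_pos_all t t_ge1 t_det i x j y Hx Hy) as Hminor.
    unfold minor_pos in Hminor.
    pose proof (t_ge1 x j); pose proof (t_ge1 i y); nia.
Qed.
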